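(* Let $Q$ be a finite Moufang loop whose order is divisible by $3$. If the nucleus of $Q$ is trivial, then $Q$ possesses a proper subloop whose order is divisible by $3$.
   Context: A loop is a magma with identity in which all left and right translations are bijections; it is Moufang if it satisfies $xy\cdot zx=(x\cdot yz)x$. The nucleus of $Q$ is the set of $x\in Q$ with $x(yz)=(xy)z$, $y(xz)=(yx)z$ and $y(zx)=(yz)x$ for all $y,z\in Q$. *)

From mathcomp Require Import all_boot.
Set Implicit Arguments. Unset Strict Implicit. Unset Printing Implicit Defensive.

Definition is_loop (T : finType) (mul : T -> T -> T) (e : T) : Prop :=
  (forall x, mul e x = x /\ mul x e = x) /\
  (forall a, bijective (mul a)) /\
  (forall a, bijective (fun x => mul x a)).

Definition is_moufang (T : finType) (mul : T -> T -> T) : Prop :=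
  forall x y z, mul (mul x y) (mul z x) = mul (mul x (mul y z)) x.

Definition nucleus (T : finType) (mul : T -> T -> T) : {set T} :=
  [set x | [forall y, forall z,
      [&& mul x (mul y z) == mul (mul x y) z,
          mul y (mul x z) == mul (mul y x) z &
          mul y (mul z x) == mul (mul y z) x]]].

Definition is_subloop (T : finType) (mul : T -> T -> T) (e : T) (S : {set T}) : Prop :=
  e \in S /\
  (forall a b, a \in S -> b \in S -> mul a b \in S) /\
  (forall a b x, a \in S -> b \in S -> mul a x = b -> x \in S) /\
  (forall a b x, a \in S -> b \in S -> mul x a = b -> x \in S).

From mathcomp Require Import all_boot fingroup perm action cyclic pgroup sylow.

Set Implicit Arguments. Unset Strict Implicit. Unset Printing Implicit Defensive.

(* McKay's counting proof of Cauchy's theorem, for p = 3.  In a Moufang loop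
   (ab)c = 1 implies (bc)a = 1, so the cyclic rotation of coordinates acts on
   the |Q|^2 triples with (ab)c = 1.  Its fixed points are the triples (x,x,x)
   with (xx)x = 1, so their number is divisible by 3 and some x <> 1 satisfies
   (xx)x = 1.  Then {1, x, xx} is a subloop of order 3; it is associative, so
   it is all of Q only if x lies in the nucleus, which is excluded. *)

Lemma card_perm_fix_mod (X : finType) (p : nat) (s : {perm X}) (A : {set X}) :
  prime p -> (s ^+ p = 1)%g -> (forall x, (s x \in A) = (x \in A)) ->
  #|A| = #|[set x in A | s x == x]| %[mod p].
Proof.
move=> p_pr sp sA.
have pG : (p.-group <[s]>)%g.
  by apply: pnat_dvd (pnat_id p_pr); rewrite order_dvdn sp.
have nAs : [acts <[s]>%g, on A | 'P] by rewrite cycle_subG; apply/astabsP.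
rewrite (pgroup_fix_mod pG nAs) afix_cycle.
congr (#|pred_of_set _| %% p).
by apply/setP=> x; rewrite in_setI [RHS]inE; congr (_ && _); apply/afix1P/eqP.
Qed.

Definition rot3 (X : Type) (t : X * X * X) : X * X * X := (t.1.2, t.2, t.1.1).

Lemma rot3K (X : Type) : cancel (@rot3 X) (@rot3 X \o @rot3 X).
Proof. by case=> [[]]. Qed.

Definition rot3_perm (X : finType) : {perm X * X * X} := perm (can_inj (@rot3K X)).

Lemma rot3_permE (X : finType) : rot3_perm X =1 @rot3 X.
Proof. exact: permE. Qed.

Lemma rot3_perm_order3 (X : finType) : (rot3_perm X ^+ 3 = 1)%g.
Proof. by apply/permP=> t; rewrite permX perm1 /= !rot3_permE; case: t => [[]]. Qed.

Section MoufangLoop.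

Variables (Q : finType) (mul : Q -> Q -> Q) (e : Q).
Hypotheses (loopQ : is_loop mul e) (moufangQ : is_moufang mul).

Local Notation "x ** y" := (mul x y) (at level 40, left associativity).

Lemma mul1q x : e ** x = x.
Proof. by case: loopQ => /(_ x)[]. Qed.

Lemma mulq1 x : x ** e = x.
Proof. by case: loopQ => /(_ x)[]. Qed.

Lemma mulqI a : injective (mul a).
Proof. by case: loopQ => _ [/(_ a)/bij_inj]. Qed.

Lemma mulIq a : injective (mul^~ a).
Proof. by case: loopQ => _ [_ /(_ a)/bij_inj]. Qed.

Lemma flexible x z : x ** (z ** x) = x ** z ** x.
Proof. by have := moufangQ x e z; rewrite mulq1 mul1q. Qed.

Definition invq a := odflt e [pick z | a ** z == e].

Lemma mulqV a : a ** invq a = e.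
Proof.
rewrite /invq; case: pickP => [z /eqP // | no_inv].
case: loopQ => _ [/(_ a)[g _ gK] _].
by have := no_inv (g e); rewrite /= gK eqxx.
Qed.

Lemma mulVq a : invq a ** a = e.
Proof. by apply: (@mulqI a); rewrite flexible mulqV mul1q mulq1. Qed.

Lemma mulq_eq1_inv a b : a ** b = e -> invq a = b.
Proof. by move=> ab1; apply: (@mulqI a); rewrite mulqV. Qed.

Lemma invqK : involutive invq.
Proof. by move=> a; apply/mulq_eq1_inv/mulVq. Qed.

Lemma mulKVq x z : x ** (invq x ** z) = z.
Proof. by apply: (@mulIq x); rewrite /= -moufangQ mulqV mul1q. Qed.

Lemma mulKq x z : invq x ** (x ** z) = z.
Proof. by have := mulKVq (invq x) z; rewrite invqK. Qed.

Lemma mulqKV y x : y ** invq x ** x = y.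
Proof. by apply: (@mulqI x); rewrite flexible -moufangQ mulVq mulq1. Qed.

Lemma mulqK y x : y ** x ** invq x = y.
Proof. by have := mulqKV y (invq x); rewrite invqK. Qed.

Lemma mulq_eq1_rotate x y z : x ** y ** z = e -> y ** z ** x = e.
Proof.
move=> /mulq_eq1_inv xy_inv.
have -> : y = invq x ** invq z by rewrite -xy_inv invqK mulKq.
by rewrite mulqKV mulVq.
Qed.

Definition unit_triples : {set Q * Q * Q} := [set t | t.1.1 ** t.1.2 ** t.2 == e].

Definition cube_roots : {set Q} := [set x | x ** x ** x == e].

Lemma card_unit_triples : #|unit_triples| = (#|Q| * #|Q|)%N.
Proof.
have -> : unit_triples = [set (p.1, p.2, invq (p.1 ** p.2)) | p : Q * Q].
  apply/setP=> [[[a b] c]]; rewrite inE /=; apply/eqP/imsetP.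
    by move=> abc1; exists (a, b); rewrite // (mulq_eq1_inv abc1).
  by case=> [[a' b']] _ [-> -> ->]; apply: mulqV.
by rewrite card_imset ?card_prod // => [[a b] [c d] [-> ->]].
Qed.

Lemma rot3_unit_triples t : (rot3 t \in unit_triples) = (t \in unit_triples).
Proof.
case: t => [[a b] c]; rewrite !inE /=.
by apply/eqP/eqP => [/mulq_eq1_rotate/mulq_eq1_rotate | /mulq_eq1_rotate].
Qed.

Lemma rot3_fixed_unit_triples :
  [set t in unit_triples | rot3 t == t] = [set (x, x, x) | x in cube_roots].
Proof.
apply/setP=> [[[a b] c]]; rewrite !inE /=; apply/idP/imsetP.
  case/andP=> abc1 /eqP[ba cb _]; rewrite cb ba in abc1 *.
  by exists a; rewrite ?inE.
by case=> x; rewrite inE => xxx1 [-> -> ->]; rewrite xxx1 eqxx.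
Qed.

Lemma dvd3_card_cube_roots : (3 %| #|Q|)%N -> (3 %| #|cube_roots|)%N.
Proof.
move=> dvd3Q.
have rot3_stable t : (rot3_perm _ t \in unit_triples) = (t \in unit_triples).
  by rewrite rot3_permE rot3_unit_triples.
have := card_perm_fix_mod (isT : prime 3) (rot3_perm_order3 Q) rot3_stable.
rewrite card_unit_triples.
under eq_finset => t do rewrite rot3_permE.
rewrite rot3_fixed_unit_triples card_imset; last by move=> ? ? [].
by rewrite /dvdn => <-; apply: dvdn_mulr.
Qed.

Lemma exists_nontrivial_cube_root :
  (3 %| #|Q|)%N -> exists2 x, x != e & x ** x ** x = e.
Proof.
move/dvd3_card_cube_roots; rewrite (cardsD1 e) inE !mul1q eqxx => dvd3.
have /card_gt0P[x] : 0 < #|cube_roots :\ e| by move: dvd3; case: #|_|.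
by rewrite !inE => /andP[x_neq1 /eqP xxx1]; exists x.
Qed.

Section Cycle3.

Variable x : Q.
Hypotheses (x_neq1 : x != e) (xxx1 : x ** x ** x = e).

Lemma mulx_xx : x ** (x ** x) = e.
Proof. by rewrite flexible. Qed.

Lemma mulxx_xx : x ** x ** (x ** x) = x.
Proof. by rewrite moufangQ mulx_xx mul1q. Qed.

Definition cycle3 : {set Q} := [set e; x; x ** x].

Lemma in_cycle3 a : (a \in cycle3) = [|| a == e, a == x | a == x ** x].
Proof. by rewrite !inE orbA. Qed.

Lemma card_cycle3 : #|cycle3| = 3.
Proof.
have xx_neq1 : x ** x != e.
  by apply: contra x_neq1 => /eqP xx1; rewrite -xxx1 xx1 mul1q.
have xx_neqx : x ** x != x.
  by apply: contra x_neq1 => /eqP xx_x; apply/eqP/(@mulqI x); rewrite mulq1.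
by rewrite /cycle3 setUC cardsU1 cards2 !inE negb_or xx_neq1 xx_neqx eq_sym x_neq1.
Qed.

Lemma mulq_cycle3 a b : a \in cycle3 -> b \in cycle3 -> a ** b \in cycle3.
Proof.
rewrite !in_cycle3 => /or3P[]/eqP-> /or3P[]/eqP->;
  by rewrite ?mul1q ?mulq1 ?xxx1 ?mulx_xx ?mulxx_xx !eqxx ?orbT.
Qed.

Lemma invq_cycle3 a : a \in cycle3 -> invq a \in cycle3.
Proof.
have inv1 : invq e = e by apply/mulq_eq1_inv/mul1q.
rewrite !in_cycle3 => /or3P[]/eqP->;
  by rewrite ?inv1 ?(mulq_eq1_inv mulx_xx) ?(mulq_eq1_inv xxx1) !eqxx ?orbT.
Qed.

Lemma cycle3_subloop : is_subloop mul e cycle3.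
Proof.
split; first by rewrite in_cycle3 eqxx.
split; first exact: mulq_cycle3.
split=> a b z aS bS abz.
  by rewrite -(mulKq a z) abz mulq_cycle3 ?invq_cycle3.
by rewrite -(mulqK z a) abz mulq_cycle3 ?invq_cycle3.
Qed.

Lemma cycle3_assoc a b c : a \in cycle3 -> b \in cycle3 -> c \in cycle3 ->
  a ** (b ** c) = a ** b ** c.
Proof.
rewrite !in_cycle3 => /or3P[]/eqP-> /or3P[]/eqP-> /or3P[]/eqP->;
  by do 3 rewrite ?mul1q ?mulq1 ?xxx1 ?mulx_xx ?mulxx_xx.
Qed.

Lemma cycle3_setT_nucleus : cycle3 = [set: Q] -> x \in nucleus mul.
Proof.
move=> cycle3T; have inS y : y \in cycle3 by rewrite cycle3T inE.
rewrite inE; apply/forallP=> y; apply/forallP=> z.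
by rewrite !cycle3_assoc ?inS ?eqxx.
Qed.

End Cycle3.

End MoufangLoop.

Theorem proposition6p4 (Q : finType) (mul : Q -> Q -> Q) (e : Q) :
  is_loop mul e -> is_moufang mul ->
  (3 %| #|Q|)%N ->
  nucleus mul = [set e] ->
  exists S : {set Q}, [/\ is_subloop mul e S, S \proper [set: Q] & (3 %| #|S|)%N].
Proof.
move=> loopQ moufangQ dvd3Q nucleus1.
have [x x_neq1 xxx1] := exists_nontrivial_cube_root loopQ moufangQ dvd3Q.
exists (cycle3 mul e x); split.
- exact: cycle3_subloop.
- rewrite properT; apply: contra x_neq1 => /eqP cycle3T.
  by rewrite -in_set1 -nucleus1 (cycle3_setT_nucleus loopQ moufangQ xxx1).
- by rewrite card_cycle3.
Qed.
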